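(* Let $u_F>0$, $U_F=(-u_F,u_F)^n$, and let $F: \mathbb{R}^m \to U_F$ be a continuous semialgebraic function. Then there exist $\mathcal{N} \in ISDnet(m,n,1)$ and $c_{\max} > 0$ such that $\mathrm{SANN}^{lim}(\mathcal{N}, x, c_{\max}) = F(x)$ for all $x\in\mathbb{R}^m$.
   Context: For $D \subseteq \mathbb{R}^N$, $ISD(D)$ is the smallest set of functions $D \to \mathbb{R}$ containing all restrictions of real polynomials and closed under pointwise $\min$ and $\max$; vector/matrix-valued functions are ISD if all entries are. $ISDnet(m,n,k) := ISD(\mathbb{R}^m\times\mathbb{R}^{n+k}\times\mathbb{R},\ \mathbb{R}^{(n+k)\times(n+k)}\times\mathbb{R}^{n+k})$; for $\mathcal N$ in it write $\mathcal N(x,z,s) = (M(x,z,s), b(x,z,s))$. For $c>0$, $\mathrm{clamp\text{-}sol}_c(M,b) := \mathrm{clamp}(M^{-1}b,-c,c)$ if $M$ is invertible and $0$ otherwise, where $\mathrm{clamp}(a,-c,c)$ replaces each component $a_i$ by $\min(\max(a_i,-c),c)$. The limit SANN $\mathrm{SANN}^{lim}(\mathcal N,x,c_{\max})$ is the vector of the first $n$ components of $z(1)$, where $z:[0,1]\to\mathbb{R}^{n+k}$ is the (exact) solution of $\dot z(s) = \mathrm{clamp\text{-}sol}_{c_{\max}}(M(x,z(s),s), b(x,z(s),s))$, $z(0)=0$. A semialgebraic function is one whose graph is a semialgebraic set. *)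

From HB Require Import structures.
From mathcomp Require Import all_boot all_order all_algebra.
From mathcomp Require Import all_classical all_reals all_analysis.
From mathcomp Require mpoly.
Set Implicit Arguments. Unset Strict Implicit. Unset Printing Implicit Defensive.
Import Order.TTheory GRing.Theory Num.Theory.
Import numFieldNormedType.Exports.
Local Open Scope ring_scope.

Section Defs.
Variable R : realType.

Definition polyfun (N : nat) (p : mpoly.mpoly N R) : ('I_N -> R) -> R :=
  fun v => mpoly.meval v p.

Inductive ISD (N : nat) : (('I_N -> R) -> R) -> Prop :=
| ISD_poly (p : mpoly.mpoly N R) : ISD (polyfun p)
| ISD_min f g : ISD f -> ISD g -> ISD (fun v => Num.min (f v) (g v))
| ISD_max f g : ISD f -> ISD g -> ISD (fun v => Num.max (f v) (g v)).

(* decoding a point of R^m x R^(n+k) x R  =  R^(m + (n+k) + 1) *)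
Definition xof (m p : nat) (v : 'I_(m + p + 1) -> R) : 'cV[R]_m :=
  \col_(i < m) v (lshift 1 (lshift p i)).
Definition zof (m p : nat) (v : 'I_(m + p + 1) -> R) : 'cV[R]_p :=
  \col_(i < p) v (lshift 1 (rshift m i)).
Definition sof (m p : nat) (v : 'I_(m + p + 1) -> R) : R :=
  v (rshift (m + p) (ord0 : 'I_1)).

Definition net (m n k : nat) :=
  'cV[R]_m -> 'cV[R]_(n + k) -> R -> 'M[R]_(n + k) * 'cV[R]_(n + k).

Definition ISDnet (m n k : nat) (Nn : net m n k) : Prop :=
  (forall i j : 'I_(n + k),
      ISD (fun v => (Nn (xof v) (zof v) (sof v)).1 i j)) /\
  (forall i : 'I_(n + k),
      ISD (fun v => (Nn (xof v) (zof v) (sof v)).2 i ord0)).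

Definition clamp (c a : R) : R := Num.min (Num.max a (- c)) c.

Definition clamp_sol (p : nat) (c : R) (M : 'M[R]_p) (b : 'cV[R]_p) : 'cV[R]_p :=
  if M \in unitmx then map_mx (clamp c) (invmx M *m b) else 0.

(* z : [0,1] -> R^(n+k) is an (exact, classical) solution of
   z'(s) = clamp-sol_c(M(x,z(s),s), b(x,z(s),s)), z(0) = 0.
   (z is given on all of R; only its behaviour on [0,1] matters: a solution on
   [0,1] with one-sided derivatives at 0 and 1 extends affinely to such a z.) *)
Definition ode_solution (m n k : nat) (Nn : net m n k) (x : 'cV[R]_m) (c : R)
    (z : R -> 'cV[R]_(n + k)) : Prop :=
  z 0 = 0 /\
  forall s : R, 0 <= s <= 1 ->
    is_derive s 1 z (clamp_sol c (Nn x (z s) s).1 (Nn x (z s) s).2).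

Definition firstn_vec (n k : nat) (w : 'cV[R]_(n + k)) : 'cV[R]_n :=
  \col_(i < n) w (lshift k i) ord0.

Definition SANN_lim_eq (m n k : nat) (Nn : net m n k) (x : 'cV[R]_m) (c : R)
    (y : 'cV[R]_n) : Prop :=
  (exists z, ode_solution Nn x c z) /\
  (forall z, ode_solution Nn x c z -> firstn_vec (z 1) = y).

Inductive semialgebraic (N : nat) : (('I_N -> R) -> Prop) -> Prop :=
| sa_eq (p : mpoly.mpoly N R) : semialgebraic (fun v => polyfun p v = 0)
| sa_pos (p : mpoly.mpoly N R) : semialgebraic (fun v => 0 < polyfun p v)
| sa_union A B : semialgebraic A -> semialgebraic B ->
    semialgebraic (fun v => A v \/ B v)
| sa_inter A B : semialgebraic A -> semialgebraic B ->
    semialgebraic (fun v => A v /\ B v)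
| sa_compl A : semialgebraic A -> semialgebraic (fun v => ~ A v).

Definition semialgebraic_fun (m n : nat) (F : 'cV[R]_m -> 'cV[R]_n) : Prop :=
  semialgebraic (fun v : 'I_(m + n) -> R =>
    F (\col_(i < m) v (lshift n i)) = \col_(j < n) v (rshift m j)).

End Defs.

From HB Require Import structures.
From mathcomp Require Import all_boot all_order all_algebra.
From mathcomp Require Import all_classical all_reals all_analysis.
From mathcomp Require Import ring lra.
From mathcomp Require mpoly.
Import (canonicals, coercions) mpoly.
Import Order.TTheory GRing.Theory Num.Theory.
Import numFieldNormedType.Exports.
Set Implicit Arguments. Unset Strict Implicit. Unset Printing Implicit Defensive.
Local Open Scope ring_scope.

(* The network integrates the clamped field [M^-1 b] with [M = diag(s, ..., s, q)]
   and [b = (3 y, 2 s q)], where [z = (y, c)].  Where the guard [q] is nonzero this is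
   [y' = 3 y / s, c' = 2 s], solved by [y = s^3 F x, c = s^2] without clamping; where
   [q] vanishes, [M] is singular and the field is [0].  The guard vanishes exactly when
   the clock is on time ([c = s^2]) and either [y] leaves the unclamped region or
   [(x, y / s^3)] is detected off the graph of [F].  The graph is semialgebraic, i.e. a
   Boolean combination of polynomial sign conditions; after clearing the denominators
   [s^3] these become polynomial conditions in [(x, y, s)], detected by min/max
   combinations of polynomials.
   Along any solution the lag [c - s^2] never increases, so it stays [<= 0].  At a zero
   of [q] in [(0, 1)] the lag would reach its maximum [0] while its derivative is
   [-2 s], so [q] never vanishes: the lag stays [0], [y / s^3] is a constant [a], and
   the detector forces [(x, a)] onto the graph, i.e. [y(1) = a = F x]. *)

Section ISDClosure.
Variables (R : realType) (N : nat).
Implicit Types (f g : ('I_N -> R) -> R) (p : mpoly.mpoly N R).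

Definition is_polyfun g := exists p, forall v, g v = polyfun p v.

Lemma is_polyfun_cst (c : R) : is_polyfun (fun=> c).
Proof. by exists (mpoly.mpolyC N c) => v; rewrite /polyfun mpoly.mevalC. Qed.

Lemma is_polyfun_coord i : is_polyfun (fun v => v i).
Proof. by exists (mpoly.mpolyX R (mpoly.mnm1 i)) => v; rewrite /polyfun mpoly.mevalXU. Qed.

Lemma is_polyfunD f g :
  is_polyfun f -> is_polyfun g -> is_polyfun (fun v => f v + g v).
Proof.
by move=> [p ep] [q eq]; exists (p + q) => v; rewrite /polyfun mpoly.mevalD ep eq.
Qed.

Lemma is_polyfunM f g :
  is_polyfun f -> is_polyfun g -> is_polyfun (fun v => f v * g v).
Proof.
by move=> [p ep] [q eq]; exists (p * q) => v; rewrite /polyfun mpoly.mevalM ep eq.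
Qed.

Lemma is_polyfunN f : is_polyfun f -> is_polyfun (fun v => - f v).
Proof. by move=> [p ep]; exists (- p) => v; rewrite /polyfun mpoly.mevalN ep. Qed.

Lemma is_polyfunB f g :
  is_polyfun f -> is_polyfun g -> is_polyfun (fun v => f v - g v).
Proof. by move=> pf pg; apply: is_polyfunD => //; apply: is_polyfunN. Qed.

Lemma is_polyfunX f k : is_polyfun f -> is_polyfun (fun v => f v ^+ k).
Proof. by move=> [p ep]; exists (p ^+ k) => v; rewrite /polyfun rmorphXn ep. Qed.

Lemma ISD_ext f g : f =1 g -> ISD f -> ISD g.
Proof. by move=> /funext ->. Qed.

Lemma ISD_polyfun g : is_polyfun g -> ISD g.
Proof. by move=> [p ep]; apply: ISD_ext (ISD_poly p) => v; rewrite ep. Qed.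

Lemma ISD_opp f : ISD f -> ISD (fun v => - f v).
Proof.
elim=> [p|f1 g1 _ If _ Ig|f1 g1 _ If _ Ig].
- exact/ISD_polyfun/is_polyfunN/(ex_intro _ p).
- by apply: ISD_ext (ISD_max If Ig) => v; rewrite oppr_min.
- by apply: ISD_ext (ISD_min If Ig) => v; rewrite oppr_max.
Qed.

Lemma ISD_norm f : ISD f -> ISD (fun v => `|f v|).
Proof. by move=> If; apply: ISD_ext (ISD_max If (ISD_opp If)) => v; rewrite maxrN. Qed.

Lemma ISD_bigmin (I : Type) (r : seq I) f (G : I -> ('I_N -> R) -> R) :
  ISD f -> (forall i, ISD (G i)) ->
  ISD (fun v => \big[Num.min/f v]_(i <- r) G i v).
Proof.
move=> If IG; elim: r => [|i r IHr]; first by apply: ISD_ext If => v; rewrite big_nil.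
by apply: ISD_ext (ISD_min (IG i) IHr) => v; rewrite big_cons.
Qed.

(* ISD is not closed under products, but min and max commute with a nonnegative factor. *)
Lemma ISD_mul_nonneg_polyfun f g : is_polyfun g -> ISD f ->
  exists2 h, ISD h & forall v, 0 <= g v -> h v = g v * f v.
Proof.
move=> pg; elim=> [p|f1 g1 _ [h1 I1 E1] _ [h2 I2 E2]|f1 g1 _ [h1 I1 E1] _ [h2 I2 E2]].
- exists (fun v => g v * polyfun p v) => //.
  exact/ISD_polyfun/is_polyfunM/(ex_intro _ p).
- exists (fun v => Num.min (h1 v) (h2 v)); first exact: ISD_min.
  by move=> v gv; rewrite minr_pMr // E1 // E2.
- exists (fun v => Num.max (h1 v) (h2 v)); first exact: ISD_max.
  by move=> v gv; rewrite maxr_pMr // E1 // E2.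
Qed.

End ISDClosure.

Arguments is_polyfun_cst {R N}.
Arguments is_polyfun_coord {R N}.

Section ClearDenominators.
Variables (R : realType) (N M : nat) (den : ('I_N -> R) -> R).
Variable T : ('I_N -> R) -> 'I_M -> R.
Implicit Types h : ('I_N -> R) -> R.
Hypothesis den_polyfun : is_polyfun den.
Hypothesis T_frac : forall i, exists e, exists2 g, is_polyfun g &
  forall v, den v != 0 -> T v i = g v / den v ^+ e.

Definition cleared h := exists k, exists2 g, is_polyfun g &
  forall v, den v != 0 -> g v = den v ^+ k * h v.

Lemma cleared_ext h h' : h =1 h' -> cleared h -> cleared h'.
Proof. by move=> e [k [g pg E]]; exists k, g => // v /E; rewrite e. Qed.

Lemma cleared_polyfun h : is_polyfun h -> cleared h.
Proof. by move=> ph; exists 0%N, h => // v _; rewrite mul1r. Qed.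

Lemma clearedD h1 h2 : cleared h1 -> cleared h2 -> cleared (fun v => h1 v + h2 v).
Proof.
move=> [k1 [g1 p1 E1]] [k2 [g2 p2 E2]].
exists (k1 + k2)%N, (fun v => g1 v * den v ^+ k2 + g2 v * den v ^+ k1).
  by apply: is_polyfunD; apply: is_polyfunM => //; apply: is_polyfunX.
by move=> v dv; rewrite E1 // E2 // exprD; ring.
Qed.

Lemma clearedM h1 h2 : cleared h1 -> cleared h2 -> cleared (fun v => h1 v * h2 v).
Proof.
move=> [k1 [g1 p1 E1]] [k2 [g2 p2 E2]].
exists (k1 + k2)%N, (fun v => g1 v * g2 v); first exact: is_polyfunM.
by move=> v dv; rewrite E1 // E2 // exprD; ring.
Qed.

Lemma cleared_prod (I : Type) (r : seq I) (F : I -> ('I_N -> R) -> R) :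
  (forall i, cleared (F i)) -> cleared (fun v => \prod_(i <- r) F i v).
Proof.
move=> cF; elim: r => [|i r IHr].
  by apply: cleared_ext (cleared_polyfun (is_polyfun_cst 1)) => v; rewrite big_nil.
by apply: cleared_ext (clearedM (cF i) IHr) => v; rewrite big_cons.
Qed.

Lemma clearedX h k : cleared h -> cleared (fun v => h v ^+ k).
Proof.
move=> ch; elim: k => [|k IHk].
  by apply: cleared_ext (cleared_polyfun (is_polyfun_cst 1)) => v; rewrite expr0.
by apply: cleared_ext (clearedM ch IHk) => v; rewrite exprS.
Qed.

Lemma cleared_coord i : cleared (fun v => T v i).
Proof.
have [e [g pg E]] := T_frac i.
by exists e, g => // v dv; rewrite E // mulrC divfK // expf_neq0.
Qed.

Lemma cleared_polyfun_comp (p : mpoly.mpoly M R) : cleared (fun v => polyfun p (T v)).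
Proof.
elim/mpoly.mpolyind: p => [|c mo p _ _ IHp].
  by apply: cleared_ext (cleared_polyfun (is_polyfun_cst 0)) => v; rewrite /polyfun mpoly.meval0.
have cX : cleared (fun v => \prod_(i < M) T v i ^+ mo i).
  by apply: cleared_prod => i; apply/clearedX/cleared_coord.
apply: cleared_ext (clearedD (clearedM (cleared_polyfun (is_polyfun_cst c)) cX) IHp).
by move=> v; rewrite /polyfun mpoly.mevalD mpoly.mevalZ mpoly.mevalX.
Qed.

End ClearDenominators.

Section Detection.
Variables (R : realType) (N M : nat) (s : ('I_N -> R) -> R).
Variable T : ('I_N -> R) -> 'I_M -> R.
Implicit Types (P Q : ('I_M -> R) -> Prop) (f : ('I_N -> R) -> R).
Hypothesis s_polyfun : is_polyfun s.
Hypothesis T_cleared : forall p : mpoly.mpoly M R, cleared s (fun v => polyfun p (T v)).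

(* A strict condition such as [0 < p (T v)] can only be certified with a margin
   proportional to [s v]; the margin disappears as [s v] tends to [0], which is
   why membership is only required to be detected for small [s v]. *)
Definition detects P f := [/\ ISD f,
  forall v, 0 < s v -> f v <= 0 -> P (T v) &
  forall w, P w -> exists2 s0, 0 < s0 &
    forall v, 0 < s v <= s0 -> T v = w -> f v <= 0].

Definition detectable P := exists f, detects P f.

Lemma detectable_ext P Q : (forall w, P w <-> Q w) -> detectable P -> detectable Q.
Proof.
move=> PQ [f [If sound complete]]; exists f; split => // [v sv fv|w /PQ/complete //].
exact/PQ/sound.
Qed.

Lemma detectableU P Q : detectable P -> detectable Q -> detectable (fun w => P w \/ Q w).
Proof.
move=> [f [If Sf Cf]] [g [Ig Sg Cg]].
exists (fun v => Num.min (f v) (g v)); split; first exact: ISD_min.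
  by move=> v sv; rewrite ge_min => /orP[/(Sf v sv)|/(Sg v sv)]; [left|right].
move=> w [/Cf [s0 s0p H]|/Cg [s0 s0p H]]; exists s0 => // v sv Tv; rewrite ge_min.
  by rewrite H.
by rewrite H ?orbT.
Qed.

Lemma detectableI P Q : detectable P -> detectable Q -> detectable (fun w => P w /\ Q w).
Proof.
move=> [f [If Sf Cf]] [g [Ig Sg Cg]].
exists (fun v => Num.max (f v) (g v)); split; first exact: ISD_max.
  by move=> v sv; rewrite ge_max => /andP[/(Sf v sv) ? /(Sg v sv)].
move=> w [/Cf [s1 s1p H1] /Cg [s2 s2p H2]]; exists (Num.min s1 s2).
  by rewrite lt_min s1p.
by move=> v /andP[sv]; rewrite le_min => /andP[v1 v2] Tv; rewrite ge_max H1 ?H2 ?sv.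
Qed.

Lemma detectable_polyfun_gt0 (p : mpoly.mpoly M R) : detectable (fun w => 0 < polyfun p w).
Proof.
have [k [g pg E]] := T_cleared p.
exists (fun v => s v ^+ k.+1 - g v); split.
- exact/ISD_polyfun/is_polyfunB/pg/is_polyfunX.
- move=> v sv; rewrite E ?gt_eqF // subr_le0 exprSr ler_pM2l ?exprn_gt0 //.
  exact: lt_le_trans.
- move=> w pw; exists (polyfun p w) => // v /andP[sv] + Tv; rewrite -Tv => svp.
  by rewrite E ?gt_eqF // subr_le0 exprSr ler_pM2l ?exprn_gt0.
Qed.

Lemma detectable_polyfun_le0 (p : mpoly.mpoly M R) : detectable (fun w => polyfun p w <= 0).
Proof.
have [k [g pg E]] := T_cleared p.
exists g; split; first exact: ISD_polyfun.
- by move=> v sv; rewrite E ?gt_eqF // pmulr_rle0 // exprn_gt0.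
- move=> w pw; exists 1 => // v /andP[sv _] Tv.
  by rewrite E ?gt_eqF // pmulr_rle0 ?exprn_gt0 // Tv.
Qed.

Lemma detectable_semialgebraic (A : ('I_M -> R) -> Prop) :
  semialgebraic A -> detectable A /\ detectable (fun w => ~ A w).
Proof.
have opp p w : polyfun (- p) w = - polyfun p w by exact: mpoly.mevalN.
elim=> {A} [p|p|A B _ [dA dA'] _ [dB dB']|A B _ [dA dA'] _ [dB dB']|A _ [dA dA']].
- split.
    apply: detectable_ext (detectableI (detectable_polyfun_le0 p)
      (detectable_polyfun_le0 (- p))) => w.
    rewrite opp oppr_le0; split=> [[le0 ge0]|->//].
    by apply/eqP; rewrite eq_le le0 ge0.
  apply: detectable_ext (detectableU (detectable_polyfun_gt0 p)
    (detectable_polyfun_gt0 (- p))) => w.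
  rewrite opp oppr_gt0; split=> [[pw|pw] /eqP|/eqP]; rewrite ?(gt_eqF pw) ?(lt_eqF pw) //.
  by rewrite neq_lt => /orP[]; [right|left].
- split; first exact: detectable_polyfun_gt0.
  by apply: detectable_ext (detectable_polyfun_le0 p) => w; rewrite leNgt; split=> /negP.
- split; first exact: detectableU.
  by apply: detectable_ext (detectableI dA' dB') => w; tauto.
- split; first exact: detectableI.
  apply: detectable_ext (detectableU dA' dB') => w; split; first tauto.
  by move=> nAB; have [a|] := boolp.pselect (A w); [right => b; apply: nAB|left].
- split => //; apply: detectable_ext dA => w; split; first tauto.
  by move=> nnA; case: (boolp.pselect (A w)).
Qed.

End Detection.

Section EntrywiseDerivative.
Context {R : realFieldType} {V : normedModType R} {p q : nat}.

Lemma is_derive_mxP (M : V -> 'M[R]_(p, q)) (t v : V) (D : 'M[R]_(p, q)) :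
  is_derive t v M D <-> forall i j, is_derive t v (fun x => M x i j) (D i j).
Proof.
split=> [dM i j|dMij].
- have dMt : derivable M t v by case: dM.
  apply: DeriveDef; first exact: (derivable_mxP _ _ _).1 dMt i j.
  have <- : 'D_v M t = D by apply: derive_val.
  by rewrite derive_mx // mxE.
- have dMt : derivable M t v by apply/derivable_mxP => i j; case: (dMij i j).
  apply: DeriveDef => //; rewrite derive_mx //; apply/matrixP => i j.
  by rewrite mxE derive_val.
Qed.

End EntrywiseDerivative.

Section RealDerivatives.
Variable R : realType.
Implicit Types (f g : R -> R) (a t : R).

Lemma is_derive_monomial a k t :
  is_derive t 1 (fun s => a * s ^+ k) (a * (k%:R * t ^+ k.-1)).
Proof.
have -> : (fun s => a * s ^+ k) = a \*: (@id R ^+ k).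
  by apply: funext => s /=; rewrite exprfctE.
apply: is_derive_eq (is_deriveZ a (is_deriveX k (is_derive_id t 1))) _.
by rewrite /GRing.scale /= mulr1.
Qed.

Lemma is_derive_divX g dg k t : t != 0 -> is_derive t 1 g dg ->
  is_derive t 1 (fun s => g s / s ^+ k) (dg / t ^+ k - k%:R * g t / t ^+ k.+1).
Proof.
move=> t0 dg_t; have tk : (@id R ^+ k) t != 0 by rewrite exprfctE expf_neq0.
have := is_deriveM dg_t (is_deriveV tk (is_deriveX k (is_derive_id t 1))).
have -> : g * (fun s => ((@id R ^+ k) s)^-1) = (fun s => g s / s ^+ k).
  by apply: funext => s /=; rewrite exprfctE.
move/is_derive_eq; apply; rewrite /GRing.scale /= exprfctE.
clear tk; case: k => [|k] /=; first by rewrite !expr0 expr1 !mul0r mulr0; field.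
have tk : t ^+ k != 0 by rewrite expf_neq0.
rewrite !exprS; move: tk; set u := t ^+ k => tk.
by field; rewrite t0 tk.
Qed.

Lemma is_derive0_eq f df a b : a <= b ->
  (forall t, a <= t <= b -> is_derive t 1 f (df t)) ->
  (forall t, a < t < b -> df t = 0) -> f b = f a.
Proof.
move=> ab fdf df0; have [<-//|ab'] := eqVneq a b.
have altb : a < b by rewrite lt_neqAle ab' ab.
have in_cc t : t \in `]a, b[ -> a <= t <= b by rewrite in_itv /= => /andP[/ltW-> /ltW->].
have cf : {within `[a, b], continuous f}%classic.
  apply: derivable_within_continuous => t; rewrite in_itv /= => /fdf.
  by case.
have [c /[!in_itv] /= cab] := MVT altb (fun t tab => fdf t (in_cc t tab)) cf.
by move/eqP; rewrite df0 // mul0r subr_eq0 => /eqP.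
Qed.

End RealDerivatives.

Lemma clamp_id (R : realType) (c a : R) : `|a| <= c -> clamp c a = a.
Proof. by rewrite ler_norml => /andP[ca ac]; rewrite /clamp max_l // min_l. Qed.

Lemma min_subD_gt0 (R : realDomainType) (a b : R) :
  (0 < Num.min (a - b) (a + b)) = (`|b| < a).
Proof. by rewrite lt_min ltr_norml subr_gt0 ltrNl -[- b < a]subr_gt0 opprK andbC. Qed.

Lemma half_in01 (R : numFieldType) : 0 < (2^-1 : R) < 1.
Proof. by rewrite invr_gt0 ltr0n /= invf_lt1 ?ltr0n // ltr1n. Qed.

Section Network.
Variables (R : realType) (m n : nat).
Local Notation N := (m + (n + 1) + 1)%N.
Implicit Types (v : 'I_N -> R) (x : 'cV[R]_m) (z : 'cV[R]_(n + 1)) (s : R).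

Definition xcoord (j : 'I_m) : 'I_N := lshift 1 (lshift (n + 1) j).
Definition zcoord (i : 'I_(n + 1)) : 'I_N := lshift 1 (rshift m i).
Definition scoord : 'I_N := rshift (m + (n + 1)) ord0.
Definition ycoord (j : 'I_n) : 'I_N := zcoord (lshift 1 j).
Definition ccoord : 'I_N := zcoord (rshift n ord0).

Definition point_of x z s : 'I_N -> R := fun i =>
  match fintype.split i with
  | inl i' => match fintype.split i' with inl j => x j ord0 | inr j => z j ord0 end
  | inr _ => s
  end.

Lemma point_of_x x z s j : point_of x z s (xcoord j) = x j ord0.
Proof.
by rewrite /point_of (unsplitK (inl _ : 'I__ + 'I_1)) (unsplitK (inl _ : 'I_m + 'I__)).
Qed.

Lemma point_of_z x z s i : point_of x z s (zcoord i) = z i ord0.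
Proof.
by rewrite /point_of (unsplitK (inl _ : 'I__ + 'I_1)) (unsplitK (inr _ : 'I_m + 'I__)).
Qed.

Lemma point_of_s x z s : point_of x z s scoord = s.
Proof. by rewrite /point_of (unsplitK (inr _ : 'I__ + 'I_1)). Qed.

Lemma point_ofK v : point_of (xof v) (zof v) (sof v) = v.
Proof.
apply: funext => i; rewrite /point_of.
case: (split_ordP i) => [i' ->|k ->]; last by rewrite /sof (ord1 k).
by case: (split_ordP i') => [j ->|j ->]; rewrite mxE.
Qed.

Definition rescaled v : 'I_(m + n) -> R := fun i =>
  match fintype.split i with
  | inl j => v (xcoord j)
  | inr j => v (ycoord j) / v scoord ^+ 3
  end.

Lemma rescaled_cleared (p : mpoly.mpoly (m + n) R) :
  cleared (fun v => v scoord) (fun v => polyfun p (rescaled v)).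
Proof.
apply: cleared_polyfun_comp; first exact: is_polyfun_coord.
move=> i; rewrite /rescaled; case: (fintype.split i) => j.
  by exists 0%N, (fun v => v (xcoord j)) => [|v _]; rewrite ?expr0 ?divr1 //; apply: is_polyfun_coord.
by exists 3%N, (fun v => v (ycoord j)) => //; apply: is_polyfun_coord.
Qed.

Variables (uF : R) (F : 'cV[R]_m -> 'cV[R]_n).
Hypothesis uF_gt0 : 0 < uF.
Hypothesis F_bounded : forall x i, - uF < F x i ord0 < uF.

Definition graph (w : 'I_(m + n) -> R) : Prop :=
  F (\col_(i < m) w (lshift n i)) = \col_(j < n) w (rshift m j).

Variable off_graph : ('I_N -> R) -> R.
Hypothesis off_graphP :
  detects (fun v => v scoord) rescaled (fun w => ~ graph w) off_graph.

Definition cmax : R := 3 * uF + 2.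

Lemma cmax_gt0 : 0 < cmax.
Proof. by rewrite /cmax; have := uF_gt0; lra. Qed.

Definition box v : R := \big[Num.min/1]_(j < n)
  Num.min (cmax * v scoord - 3 * v (ycoord j)) (cmax * v scoord + 3 * v (ycoord j)).

Lemma box_gt0 v : 0 < box v <-> forall j, 3 * `|v (ycoord j)| < cmax * v scoord.
Proof.
have box_j j : (0 < Num.min (cmax * v scoord - 3 * v (ycoord j))
                            (cmax * v scoord + 3 * v (ycoord j))) =
               (3 * `|v (ycoord j)| < cmax * v scoord).
  by rewrite min_subD_gt0 normrM gtr0_norm.
rewrite /box; split => [/bigmin_gtP[_ bj] j|bj]; first by rewrite -box_j bj.
by apply/bigmin_gtP; split => // j _; rewrite box_j.
Qed.

Definition guard v : R :=
  Num.max `|v ccoord - v scoord ^+ 2| (Num.min (off_graph v) (box v)).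

Lemma guard_eq0 v :
  guard v = 0 <-> v ccoord = v scoord ^+ 2 /\ Num.min (off_graph v) (box v) <= 0.
Proof.
rewrite /guard; split => [g0|[-> mle0]].
  have := le_refl (guard v); rewrite {2}/guard g0 ge_max normr_le0 subr_eq0.
  by move=> /andP[/eqP].
by apply/eqP; rewrite eq_le ge_max subrr normr0 lexx mle0 le_max lexx.
Qed.

Lemma ISD_guard : ISD guard.
Proof.
have [If _ _] := off_graphP.
apply: ISD_max.
  by apply/ISD_norm/ISD_polyfun/is_polyfunB/is_polyfunX; apply: is_polyfun_coord.
apply: ISD_min => //; apply: ISD_bigmin => [|j]; first exact/ISD_polyfun/is_polyfun_cst.
have cs : is_polyfun (fun v => cmax * v scoord).
  exact/is_polyfunM/is_polyfun_coord/is_polyfun_cst.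
have ty : is_polyfun (fun v => 3 * v (ycoord j)).
  exact/is_polyfunM/is_polyfun_coord/is_polyfun_cst.
by apply: ISD_min; apply: ISD_polyfun; [apply: is_polyfunB|apply: is_polyfunD].
Qed.

(* The entry [2 s q] of [b] is not a min/max of polynomials by construction (ISD
   functions are not closed under products); an ISD realisation is supplied. *)
Variable scaled_guard : ('I_N -> R) -> R.
Hypothesis ISD_scaled_guard : ISD scaled_guard.
Hypothesis scaled_guardE : forall v, 0 <= v scoord -> scaled_guard v = 2 * v scoord * guard v.

Definition net_matrix v : 'M[R]_(n + 1) :=
  diag_mx (row_mx (\row_(j < n) v scoord) (\row_(j < 1) guard v)).

Definition net_vector v : 'cV[R]_(n + 1) :=
  col_mx (\col_(j < n) (3 * v (ycoord j))) (\col_(j < 1) scaled_guard v).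

Definition network : net R m n 1 :=
  fun x z s => (net_matrix (point_of x z s), net_vector (point_of x z s)).

Lemma ISDnet_network : ISDnet network.
Proof.
split => [i j|i]; rewrite /network /=.
  apply: (@ISD_ext _ _ (fun v => net_matrix v i j)) => [v|]; first by rewrite point_ofK.
  pose d v := row_mx (\row_(j < n) v scoord) (\row_(j < 1) guard v).
  apply: (@ISD_ext _ _ (fun v => d v ord0 i *+ (i == j)) (fun v => net_matrix v i j)).
    by move=> v; rewrite [in RHS]mxE.
  case: (i == j); last exact/ISD_polyfun/is_polyfun_cst.
  case: (split_ordP i) => [k ->|k ->].
    by apply: ISD_ext (ISD_polyfun (is_polyfun_coord scoord)) => v; rewrite row_mxEl mxE.
  by apply: ISD_ext ISD_guard => v; rewrite row_mxEr mxE.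
apply: (@ISD_ext _ _ (fun v => net_vector v i ord0)) => [v|]; first by rewrite point_ofK.
case: (split_ordP i) => [k ->|k ->].
  apply: ISD_ext (ISD_polyfun (is_polyfunM (is_polyfun_cst 3) (is_polyfun_coord (ycoord k)))).
  by move=> v; rewrite col_mxEu mxE.
by apply: ISD_ext ISD_scaled_guard => v; rewrite col_mxEd mxE.
Qed.

Definition velocity x z s : 'cV[R]_(n + 1) :=
  clamp_sol cmax (network x z s).1 (network x z s).2.

Lemma velocity_guard0 x z s : guard (point_of x z s) = 0 -> velocity x z s = 0.
Proof.
move=> g0; rewrite /velocity /clamp_sol /= unitmxE unitfE det_diag.
by rewrite (bigD1 (rshift n ord0)) //= row_mxEr mxE g0 mul0r eqxx.
Qed.

Lemma velocity_guard_neq0 x z s : 0 < s -> guard (point_of x z s) != 0 ->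
  velocity x z s = map_mx (clamp cmax)
    (col_mx (\col_(j < n) (3 * z (lshift 1 j) ord0 / s)) (\col_(j < 1) (2 * s))).
Proof.
move=> s_gt0 g0; set w := col_mx _ _.
have unitM : net_matrix (point_of x z s) \in unitmx.
  rewrite unitmxE unitfE det_diag prodf_seq_neq0; apply/allP => i _.
  case: (split_ordP i) => [k ->|k ->]; last by rewrite row_mxEr mxE.
  by rewrite row_mxEl mxE point_of_s gt_eqF.
have Mw : net_matrix (point_of x z s) *m w = net_vector (point_of x z s).
  rewrite mul_diag_mx; apply/matrixP => i j; rewrite [LHS]mxE (ord1 j).
  case: (split_ordP i) => [k ->|k ->]; rewrite !mxE.
    rewrite (unsplitK (inl k : 'I_n + 'I_1)) !mxE point_of_s /ycoord point_of_z.
    by field; rewrite gt_eqF.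
  rewrite (unsplitK (inr k : 'I_n + 'I_1)) !mxE scaled_guardE point_of_s ?ltW //.
  by rewrite mulrC.
by rewrite /velocity /clamp_sol /= unitM -Mw mulKmx.
Qed.

Lemma velocity_origin x : velocity x 0 0 = 0.
Proof.
have b0 : net_vector (point_of x 0 0) = 0.
  apply/matrixP => i j; rewrite (ord1 j) [RHS]mxE.
  case: (split_ordP i) => [k ->|k ->]; rewrite ?col_mxEu ?col_mxEd mxE.
    by rewrite /ycoord point_of_z mxE mulr0.
  by rewrite scaled_guardE point_of_s // mulr0 mul0r.
rewrite /velocity /clamp_sol /= b0 mulmx0; case: ifP => // _.
by apply/matrixP => i j; rewrite !mxE clamp_id // normr0 ltW // cmax_gt0.
Qed.

Lemma velocity_clock x z s : 0 < s <= 1 -> guard (point_of x z s) != 0 ->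
  velocity x z s (rshift n ord0) ord0 = 2 * s.
Proof.
move=> /andP[s_gt0 s_le1] g0; rewrite velocity_guard_neq0 // mxE col_mxEd mxE clamp_id //.
by rewrite /cmax gtr0_norm ?mulr_gt0 //; have := uF_gt0; lra.
Qed.

Lemma velocity_state x z s j : 0 < s -> guard (point_of x z s) != 0 ->
  3 * `|z (lshift 1 j) ord0| < cmax * s ->
  velocity x z s (lshift 1 j) ord0 = 3 * z (lshift 1 j) ord0 / s.
Proof.
move=> s_gt0 g0 zj; rewrite velocity_guard_neq0 // mxE col_mxEu mxE clamp_id //.
by rewrite normrM normfV normrM (gtr0_norm s_gt0) gtr0_norm // ler_pdivrMr // ltW.
Qed.

Definition pair_of x (a : 'cV[R]_n) : 'I_(m + n) -> R := fun i =>
  match fintype.split i with inl j => x j ord0 | inr j => a j ord0 end.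

Lemma graph_pair_of x a : graph (pair_of x a) <-> F x = a.
Proof.
rewrite /graph; have -> : \col_(i < m) pair_of x a (lshift n i) = x.
  by apply/matrixP => i j; rewrite (ord1 j) mxE /pair_of (unsplitK (inl i : 'I_m + 'I_n)).
have -> : \col_(j < n) pair_of x a (rshift m j) = a.
  by apply/matrixP => i j; rewrite (ord1 j) mxE /pair_of (unsplitK (inr i : 'I_m + 'I_n)).
by [].
Qed.

Lemma rescaled_point_of x z s :
  rescaled (point_of x z s) = pair_of x (\col_(j < n) (z (lshift 1 j) ord0 / s ^+ 3)).
Proof.
apply: funext => i; rewrite /rescaled /pair_of.
by case: (fintype.split i) => j; rewrite ?point_of_x // mxE point_of_z point_of_s.
Qed.

Definition trajectory x s : 'cV[R]_(n + 1) := col_mx (s ^+ 3 *: F x) (\col_(j < 1) s ^+ 2).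

Lemma trajectory0 x : trajectory x 0 = 0.
Proof.
apply/matrixP => i j; rewrite [RHS]mxE.
by case: (split_ordP i) => k ->; rewrite ?col_mxEu ?col_mxEd !mxE expr0n ?mul0r.
Qed.

Lemma trajectory_derive x s : is_derive s 1 (trajectory x)
  (col_mx ((3 * s ^+ 2) *: F x) (\col_(j < 1) (2 * s))).
Proof.
apply/is_derive_mxP => i j; rewrite (ord1 j).
case: (split_ordP i) => [k ->|k ->].
  have -> : (fun t => trajectory x t (lshift 1 k) ord0) = (fun t => F x k ord0 * t ^+ 3).
    by apply: funext => t; rewrite col_mxEu mxE mulrC.
  by apply: is_derive_eq (is_derive_monomial _ 3 s) _; rewrite col_mxEu mxE mulrC.
have -> : (fun t => trajectory x t (rshift n k) ord0) = (fun t => 1 * t ^+ 2).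
  by apply: funext => t; rewrite col_mxEd mxE mul1r.
by apply: is_derive_eq (is_derive_monomial _ 2 s) _; rewrite col_mxEd mxE mul1r expr1.
Qed.

Lemma guard_trajectory_neq0 x s : 0 < s <= 1 ->
  guard (point_of x (trajectory x s) s) != 0.
Proof.
move=> /andP[s_gt0 s_le1]; have [_ sound _] := off_graphP.
have s3 : s ^+ 3 != 0 by rewrite expf_neq0 // gt_eqF.
apply/eqP => /guard_eq0[_]; rewrite ge_min => /orP[/sound|].
  rewrite point_of_s => /(_ s_gt0); apply; rewrite rescaled_point_of graph_pair_of.
  by apply/matrixP => i j; rewrite (ord1 j) [RHS]mxE col_mxEu mxE mulrAC divff ?mul1r.
apply/negP; rewrite -ltNge; apply/box_gt0 => j.
rewrite /ycoord point_of_z point_of_s col_mxEu mxE normrM (ger0_norm (exprn_ge0 _ (ltW s_gt0))).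
have s3_le : s ^+ 3 <= s by rewrite -[leRHS]mulr1 exprS ler_pM2l // expr_le1 // ltW.
have := F_bounded x j; rewrite -ltr_norml /cmax => Fj.
have := normr_ge0 (F x j ord0); have := exprn_ge0 3 (ltW s_gt0); nra.
Qed.

Lemma trajectory_solution x : ode_solution network x cmax (trajectory x).
Proof.
split => [|s /andP[s_ge0 s_le1]]; first exact: trajectory0.
apply: is_derive_eq (trajectory_derive x s) _; rewrite -/(velocity _ _ _).
have [->|s_neq0] := eqVneq s 0.
  rewrite trajectory0 velocity_origin; apply/matrixP => i j; rewrite [RHS]mxE.
  by case: (split_ordP i) => k ->; rewrite ?col_mxEu ?col_mxEd mxE ?mxE ?expr0n ?mulr0 ?mul0r.
have s_gt0 : 0 < s by rewrite lt_neqAle eq_sym s_neq0.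
have g0 : guard (point_of x (trajectory x s) s) != 0.
  by apply: guard_trajectory_neq0; rewrite s_gt0.
rewrite velocity_guard_neq0 //; apply/matrixP => i j; rewrite (ord1 j) [RHS]mxE.
case: (split_ordP i) => [k ->|k ->]; last first.
  rewrite !col_mxEd !mxE clamp_id // gtr0_norm ?mulr_gt0 // /cmax.
  by have := uF_gt0; lra.
rewrite !col_mxEu [LHS]mxE [in RHS]mxE /trajectory col_mxEu mxE.
have -> : 3 * (s ^+ 3 * F x k ord0) / s = 3 * s ^+ 2 * F x k ord0.
  by field; rewrite gt_eqF.
rewrite clamp_id // !normrM (gtr0_norm s_gt0) gtr0_norm //.
have ss : s * s <= 1 by rewrite -expr2 expr_le1 // ltW.
have := ler_wpM2r (normr_ge0 (F x k ord0)) ss; rewrite mul1r.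
have := F_bounded x k; rewrite -ltr_norml /cmax; have := uF_gt0; nra.
Qed.

Section Uniqueness.
Variables (x : 'cV[R]_m) (z : R -> 'cV[R]_(n + 1)).
Hypothesis z_sol : ode_solution network x cmax z.

Local Notation pt s := (point_of x (z s) s).
Local Notation clock t := (z t (rshift n ord0) ord0).
Local Notation state j t := (z t (lshift 1 j) ord0).

Lemma solution_derive i s : 0 <= s <= 1 ->
  is_derive s 1 (fun t => z t i ord0) (velocity x (z s) s i ord0).
Proof. by move=> s01; move/is_derive_mxP: (z_sol.2 s s01); apply. Qed.

Definition lag t := clock t - t ^+ 2.

Lemma lag_derive s : 0 <= s <= 1 ->
  is_derive s 1 lag (velocity x (z s) s (rshift n ord0) ord0 - 2 * s).
Proof.
move=> s01; have := is_deriveB (solution_derive (rshift n ord0) s01) (is_derive_monomial 1 2 s).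
have -> : (fun t => clock t) - (fun t => 1 * t ^+ 2) = lag.
  by apply: funext => t; rewrite /lag -[LHS]/(clock t - 1 * t ^+ 2) mul1r.
by move/is_derive_eq; apply; rewrite mul1r expr1.
Qed.

Lemma lag_derive_le0 s : 0 <= s <= 1 -> velocity x (z s) s (rshift n ord0) ord0 - 2 * s <= 0.
Proof.
move=> /andP[s_ge0 s_le1]; have [->|s_neq0] := eqVneq s 0.
  by rewrite z_sol.1 velocity_origin mxE mulr0 subrr.
have s_gt0 : 0 < s by rewrite lt_neqAle eq_sym s_neq0.
have [g0|g0] := eqVneq (guard (pt s)) 0.
  by rewrite velocity_guard0 // mxE sub0r oppr_le0 mulr_ge0.
by rewrite velocity_clock ?s_gt0 // subrr.
Qed.

Lemma lag_le0 t : 0 <= t <= 1 -> lag t <= 0.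
Proof.
move=> t01; have lag0 : lag 0 = 0 by rewrite /lag z_sol.1 mxE expr0n subrr.
have in01 u : u \in `]0, 1[ -> 0 <= u <= 1 by rewrite in_itv /= => /andP[/ltW-> /ltW->].
rewrite -lag0; apply: (ler0_derive1_le_cc (a := 0) (b := 1)).
- by move=> u /in01/lag_derive[].
- move=> u /in01 u01; rewrite derive1E; have [_ ->] := lag_derive u01.
  exact: lag_derive_le0.
- apply: derivable_within_continuous => u; rewrite in_itv /= => u01.
  by have [] := lag_derive u01.
- by rewrite in_itv.
- by rewrite in_itv /= lexx ler01.
- by case/andP: t01.
Qed.

Lemma guard_solution_neq0 s : 0 < s < 1 -> guard (pt s) != 0.
Proof.
move=> /andP[s_gt0 s_lt1]; apply/eqP => g0.
have s01 : 0 <= s <= 1 by rewrite !ltW.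
have lag_s : lag s = 0.
  have [+ _] := (guard_eq0 (pt s)).1 g0.
  by rewrite point_of_z point_of_s /lag => ->; rewrite subrr.
have : is_derive s 1 lag 0.
  apply: (derive1_at_max (a := 0) (b := 1)) => //.
  - move=> u; rewrite in_itv /= => /andP[u0 u1].
    by have [] := @lag_derive u (ltac:(rewrite !ltW)).
  - by rewrite in_itv /= s_gt0.
  - by move=> u; rewrite in_itv /= lag_s => /andP[u0 u1]; apply: lag_le0; rewrite !ltW.
case=> _; have [_ ->] := lag_derive s01; rewrite velocity_guard0 // mxE sub0r.
lra.
Qed.

Lemma lag_eq0 t : 0 <= t < 1 -> lag t = 0.
Proof.
move=> /andP[t_ge0 t_lt1]; have lag0 : lag 0 = 0 by rewrite /lag z_sol.1 mxE expr0n subrr.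
rewrite -lag0; apply: (is_derive0_eq (df := fun s => velocity x (z s) s (rshift n ord0) ord0 - 2 * s)) => //.
  by move=> s /andP[s_ge0 s_le]; apply: lag_derive; rewrite s_ge0 (le_trans s_le) // ltW.
move=> s /andP[s_gt0 s_lt]; have s_lt1 := lt_trans s_lt t_lt1.
rewrite velocity_clock ?subrr //; first by rewrite s_gt0 ltW.
by apply: guard_solution_neq0; rewrite s_gt0.
Qed.

Lemma off_graph_box_gt0 s : 0 < s < 1 -> 0 < off_graph (pt s) /\ 0 < box (pt s).
Proof.
move=> s01; have [s_gt0 s_lt1] := andP s01; have := guard_solution_neq0 s01.
have clock_s : (pt s) ccoord = (pt s) scoord ^+ 2.
  apply/eqP; rewrite point_of_z point_of_s -subr_eq0; apply/eqP.
  by apply: lag_eq0; rewrite s_lt1 ltW.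
move=> g0; apply/andP; rewrite -lt_min ltNge; apply: contra g0 => m_le0.
exact/eqP/guard_eq0.
Qed.

Lemma velocity_solution_state j s : 0 < s < 1 ->
  velocity x (z s) s (lshift 1 j) ord0 = 3 * state j s / s.
Proof.
move=> s01; have [s_gt0 _] := andP s01.
apply: velocity_state s_gt0 (guard_solution_neq0 s01) _.
by have [_ /box_gt0/(_ j)] := off_graph_box_gt0 s01; rewrite /ycoord point_of_z point_of_s.
Qed.

Lemma state_derive j s : 0 < s < 1 -> is_derive s 1 (fun t => state j t) (3 * state j s / s).
Proof.
move=> s01; rewrite -velocity_solution_state //.
by apply: solution_derive; case/andP: s01 => /ltW-> /ltW->.
Qed.

Definition coef j := state j (2^-1) / (2^-1) ^+ 3.

Lemma state_cubic j s : 0 < s < 1 -> state j s = coef j * s ^+ 3.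
Proof.
move=> s01; have [s_gt0 s_lt1] := andP s01; have [h_gt0 h_lt1] := andP (half_in01 R).
pose psi t := state j t / t ^+ 3.
have psi' (t : R) : 0 < t < 1 -> is_derive t 1 psi 0.
  move=> t01; have t0 : t != 0 by rewrite gt_eqF //; case/andP: t01.
  apply: is_derive_eq (is_derive_divX 3 t0 (state_derive j t01)) _.
  by field.
suff -> : coef j = psi s by rewrite /psi divfK // expf_neq0 // gt_eqF.
have [sh|hs] := lerP s (2^-1).
  apply: (is_derive0_eq (df := fun=> 0)) sh _ _ => // t /andP[st th].
  by apply: psi'; rewrite (lt_le_trans s_gt0 st) (le_lt_trans th).
apply/esym/(is_derive0_eq (df := fun=> 0) (ltW hs)) => // t /andP[ht ts].
by apply: psi'; rewrite (lt_le_trans h_gt0 ht) (le_lt_trans ts).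
Qed.

Lemma state_at1 j : state j 1 = coef j.
Proof.
have [h_gt0 h_lt1] := andP (half_in01 R).
pose g t := state j t - coef j * t ^+ 3.
suff : g 1 = g (2^-1).
  rewrite /g (state_cubic j (half_in01 R)) subrr expr1n mulr1.
  by move/eqP; rewrite subr_eq0 => /eqP.
apply: (is_derive0_eq (df := fun t =>
  velocity x (z t) t (lshift 1 j) ord0 - coef j * (3%:R * t ^+ 2))) (ltW h_lt1) _ _.
  move=> t /andP[ht t1]; have t01 : 0 <= t <= 1 by rewrite t1 (le_trans _ ht) // ltW.
  exact: is_deriveB (solution_derive _ t01) (is_derive_monomial _ 3 t).
move=> t /andP[ht t1]; have t01 : 0 < t < 1 by rewrite t1 (lt_trans h_gt0).
rewrite velocity_solution_state // state_cubic //.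
by field; rewrite gt_eqF //; case/andP: t01.
Qed.

Lemma F_coef : F x = \col_(j < n) coef j.
Proof.
apply/graph_pair_of; case: (boolp.pselect (graph (pair_of x (\col_j coef j)))) => // off.
have [_ _ /(_ _ off) [s0 s0_gt0 off_le0]] := off_graphP.
have [h_gt0 h_lt1] := andP (half_in01 R).
pose s := Num.min s0 (2^-1).
have s01 : 0 < s < 1 by rewrite lt_min s0_gt0 h_gt0 gt_min h_lt1 orbT.
have [+ _] := off_graph_box_gt0 s01; rewrite ltNge off_le0 //.
  by rewrite point_of_s ge_min lexx; case/andP: s01 => ->.
rewrite rescaled_point_of; congr pair_of; apply/matrixP => j k; rewrite (ord1 k) !mxE.
by rewrite state_cubic // mulfK // expf_neq0 // gt_eqF //; case/andP: s01.
Qed.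

Lemma solution_firstn : firstn_vec (z 1) = F x.
Proof. by rewrite F_coef; apply/matrixP => j k; rewrite (ord1 k) !mxE state_at1. Qed.

End Uniqueness.

Lemma SANN_lim_network x : SANN_lim_eq network x cmax (F x).
Proof.
split => [|z]; first by exists (trajectory x); apply: trajectory_solution.
exact: solution_firstn.
Qed.

End Network.

Theorem mainTheorem5 (R : realType) (m n : nat) (uF : R) (F : 'cV[R]_m -> 'cV[R]_n) :
  0 < uF ->
  continuous F ->
  (forall (x : 'cV[R]_m) (i : 'I_n), - uF < F x i ord0 < uF) ->
  semialgebraic_fun F ->
  exists (Nn : net R m n 1) (cmax : R),
    ISDnet Nn /\ 0 < cmax /\
    forall x : 'cV[R]_m, SANN_lim_eq Nn x cmax (F x).
Proof.
move=> uF_gt0 _ F_bounded F_sa.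
have [_ [off_graph off_graphP]] :=
  detectable_semialgebraic (is_polyfun_coord _) (@rescaled_cleared R m n) F_sa.
have [scaled_guard ISD_sg sgE] := ISD_mul_nonneg_polyfun
  (is_polyfunM (is_polyfun_cst 2) (is_polyfun_coord (scoord m n))) (ISD_guard uF off_graphP).
exists (network uF off_graph scaled_guard), (cmax uF).
split; first exact: (ISDnet_network uF off_graphP ISD_sg).
split; first exact: cmax_gt0.
by move=> x; apply: SANN_lim_network => // v s_ge0; apply: sgE; rewrite mulr_ge0.
Qed.
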